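(* Let $\mathbf{V}$ be a variety of Heyting algebras and $L\in\mathbf{V}$ finitely presented. If $\langle u,M\rangle$ is a unifier of $L$ in $\mathbf{V}$, then $\langle\mathcal{B}(u),\mathcal{B}(M)\rangle$ is a unifier of $\mathcal{B}(L)$ in $\rho^*(\mathbf{V})$.
   Context: Interior algebra: Boolean algebra with operator $g$ satisfying $g(1)=1$, $g(xy)=g(x)g(y)$, $g(x)\le x$, $gg(x)=g(x)$. For a Heyting algebra $L$, $\mathcal{B}(L)=\langle\mathrm{Fr}(L),g_L\rangle$ with $\mathrm{Fr}(L)$ the free Boolean extension of $L$ and $g_L((-u_1+v_1)\cdots(-u_n+v_n))=(u_1\Rightarrow v_1)\cdots(u_n\Rightarrow v_n)$; for a Heyting homomorphism $h\colon L\to M$, $\mathcal{B}(h)$ is the unique interior algebra homomorphism $\mathcal{B}(L)\to\mathcal{B}(M)$ extending $h$. $\rho^*(\mathbf{V})$ is the variety generated by $\{\mathcal{B}(L):L\in\mathbf{V}\}$. A unifier of a finitely presented $A$ in a variety $\mathbf{W}$ is a pair $\langle u,B\rangle$ with $B$ finitely presented and projective in $\mathbf{W}$ and $u\colon A\to B$ a homomorphism. *)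

From Stdlib Require List.
From mathcomp Require Import all_boot.

Set Implicit Arguments.
Unset Strict Implicit.
Unset Printing Implicit Defensive.

Record signature := Signature { op : Type; arity : op -> nat }.

Record algebra (S : signature) := Algebra {
  car :> Type;
  interp : forall o : op S, ('I_(@arity S o) -> car) -> car }.

Arguments interp {S} _ o _.

Inductive term (S : signature) : Type :=
  | Var : nat -> term S
  | App : forall o : op S, ('I_(@arity S o) -> term S) -> term S.

Arguments Var {S} _.
Arguments App {S} o _.

Fixpoint eval (S : signature) (A : algebra S) (v : nat -> A) (t : term S) : A :=
  match t with
  | Var k => v k
  | App o f => interp A o (fun i => eval v (f i))
  end.

Fixpoint vars_lt (S : signature) (n : nat) (t : term S) : Prop :=
  match t with
  | Var k => k < n
  | App o f => forall i, vars_lt n (f i)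
  end.

Definition satisfies (S : signature) (A : algebra S) (e : term S * term S) : Prop :=
  forall v : nat -> A, eval v e.1 = eval v e.2.

Definition is_hom (S : signature) (A B : algebra S) (f : A -> B) : Prop :=
  forall (o : op S) (args : 'I_(@arity S o) -> A),
    f (interp A o args) = interp B o (fun i => f (args i)).

Definition aclass (S : signature) := algebra S -> Prop.

Definition fin_presented (S : signature) (W : aclass S) (A : algebra S) : Prop :=
  W A /\
  exists (n : nat) (a : nat -> A) (R : seq (term S * term S)),
    (forall p, List.In p R -> vars_lt n p.1 /\ vars_lt n p.2) /\
    (forall p, List.In p R -> eval a p.1 = eval a p.2) /\
    (forall B : algebra S, W B ->
       forall b : nat -> B,
         (forall p, List.In p R -> eval b p.1 = eval b p.2) ->
         exists h : A -> B,
           is_hom h /\ (forall i, i < n -> h (a i) = b i) /\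
           (forall h' : A -> B, is_hom h' -> (forall i, i < n -> h' (a i) = b i) ->
              forall x, h' x = h x)).

Definition projective (S : signature) (W : aclass S) (P : algebra S) : Prop :=
  W P /\
  forall (C D : algebra S), W C -> W D ->
    forall (f : C -> D) (g : P -> D),
      is_hom f -> (forall y : D, exists x : C, f x = y) -> is_hom g ->
      exists h : P -> C, is_hom h /\ (forall x, f (h x) = g x).

Definition unifier (S : signature) (W : aclass S) (A B : algebra S) (u : A -> B) : Prop :=
  fin_presented W A /\ fin_presented W B /\ projective W B /\ is_hom u.

Definition args0 (T : Type) : 'I_0 -> T :=
  fun i => False_rect T (Bool.diff_false_true (ltn_ord i)).
Definition args1 (T : Type) (x : T) : 'I_1 -> T := fun _ => x.
Definition args2 (T : Type) (x y : T) : 'I_2 -> T :=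
  fun i => if nat_of_ord i == 0 then x else y.

Inductive hop := HMeet | HJoin | HImp | HBot | HTop.
Definition harity (o : hop) : nat :=
  match o with HMeet | HJoin | HImp => 2 | HBot | HTop => 0 end.
Definition hsig : signature := Signature harity.

Section HeytingOps.
Variable A : algebra hsig.
Definition hmeet (x y : A) : A := interp A HMeet (args2 x y).
Definition hjoin (x y : A) : A := interp A HJoin (args2 x y).
Definition himp (x y : A) : A := interp A HImp (args2 x y).
Definition hbot : A := interp A HBot (@args0 A).
Definition htop : A := interp A HTop (@args0 A).
Definition hle (x y : A) : Prop := hmeet x y = x.

Definition is_HA : Prop :=
  (forall x y, hmeet x y = hmeet y x) /\
  (forall x y z, hmeet x (hmeet y z) = hmeet (hmeet x y) z) /\
  (forall x y, hjoin x y = hjoin y x) /\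
  (forall x y z, hjoin x (hjoin y z) = hjoin (hjoin x y) z) /\
  (forall x y, hmeet x (hjoin x y) = x) /\
  (forall x y, hjoin x (hmeet x y) = x) /\
  (forall x, hmeet x htop = x) /\
  (forall x, hjoin x hbot = x) /\
  (forall a x y, hle (hmeet a x) y <-> hle a (himp x y)).
End HeytingOps.

Definition HA_variety (E : term hsig * term hsig -> Prop) : aclass hsig :=
  fun A => is_HA A /\ forall e, E e -> satisfies A e.

Inductive iop := IMeet | IJoin | ICompl | IBot | ITop | IInt.
Definition iarity (o : iop) : nat :=
  match o with IMeet | IJoin => 2 | ICompl | IInt => 1 | IBot | ITop => 0 end.
Definition isig : signature := Signature iarity.

Section InteriorOps.
Variable A : algebra isig.
Definition imeet (x y : A) : A := interp A IMeet (args2 x y).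
Definition ijoin (x y : A) : A := interp A IJoin (args2 x y).
Definition icompl (x : A) : A := interp A ICompl (args1 x).
Definition ibot : A := interp A IBot (@args0 A).
Definition itop : A := interp A ITop (@args0 A).
Definition iint (x : A) : A := interp A IInt (args1 x).
Definition ile (x y : A) : Prop := imeet x y = x.

Definition is_IA : Prop :=
  (forall x y, imeet x y = imeet y x) /\
  (forall x y z, imeet x (imeet y z) = imeet (imeet x y) z) /\
  (forall x y, ijoin x y = ijoin y x) /\
  (forall x y z, ijoin x (ijoin y z) = ijoin (ijoin x y) z) /\
  (forall x y, imeet x (ijoin x y) = x) /\
  (forall x y, ijoin x (imeet x y) = x) /\
  (forall x y z, imeet x (ijoin y z) = ijoin (imeet x y) (imeet x z)) /\
  (forall x, imeet x itop = x) /\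
  (forall x, ijoin x ibot = x) /\
  (forall x, imeet x (icompl x) = ibot) /\
  (forall x, ijoin x (icompl x) = itop) /\
  iint itop = itop /\
  (forall x y, iint (imeet x y) = imeet (iint x) (iint y)) /\
  (forall x, ile (iint x) x) /\
  (forall x, iint (iint x) = iint x).

Definition ibigmeet (s : seq A) : A := foldr imeet itop s.
End InteriorOps.

Inductive bgen (L : Type) (B : algebra isig) (e : L -> B) : B -> Prop :=
  | bgen_img : forall a, bgen e (e a)
  | bgen_bot : bgen e (ibot B)
  | bgen_top : bgen e (itop B)
  | bgen_meet : forall x y, bgen e x -> bgen e y -> bgen e (imeet x y)
  | bgen_join : forall x y, bgen e x -> bgen e y -> bgen e (ijoin x y)
  | bgen_compl : forall x, bgen e x -> bgen e (icompl x).

Definition hbigmeet (L : algebra hsig) (s : seq L) : L := foldr (@hmeet L) (htop L) s.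

(* (B, e) realizes B(L) = <Fr(L), g_L>: B is an interior algebra whose
   Boolean reduct is the free Boolean extension of the Heyting algebra L
   along the bounded-lattice embedding e (e injective, e(L) generates B),
   and g_L((-u_1+v_1)...(-u_n+v_n)) = (u_1=>v_1)...(u_n=>v_n). *)
Definition is_B_of (L : algebra hsig) (B : algebra isig) (e : L -> B) : Prop :=
  is_HA L /\ is_IA B /\
  injective e /\
  (forall x y, e (hmeet x y) = imeet (e x) (e y)) /\
  (forall x y, e (hjoin x y) = ijoin (e x) (e y)) /\
  e (hbot L) = ibot B /\ e (htop L) = itop B /\
  (forall x : B, bgen e x) /\
  (forall s : seq (L * L),
     iint (ibigmeet [seq ijoin (icompl (e p.1)) (e p.2) | p <- s])
     = e (hbigmeet [seq himp p.1 p.2 | p <- s])).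

Definition is_B_hom (L M : algebra hsig) (BL BM : algebra isig)
    (eL : L -> BL) (eM : M -> BM) (h : L -> M) (Bh : BL -> BM) : Prop :=
  is_hom Bh /\ forall x, Bh (eL x) = eM (h x).

(* rho^*(V): the variety of interior algebras generated by
   { B(L) : L in V }, i.e. the interior algebras satisfying every identity
   valid in all B(L), L in V. *)
Definition rho_star (V : aclass hsig) : aclass isig :=
  fun A => is_IA A /\
    forall e : term isig * term isig,
      (forall (L : algebra hsig) (B : algebra isig) (eL : L -> B),
          V L -> is_B_of eL -> satisfies B e) ->
      satisfies A e.

(* B(L) is generated as a Boolean algebra by the lattice embedding e : L -> B(L), so every
   element is a conjunction of clauses -e(u) ⊔ e(v).  Whether one such conjunction lies
   below another is decided by lattice computations inside L alone; hence every bounded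
   lattice map phi : L -> C into an interior algebra with phi (u ⇒ v) = iint (-phi u ⊔ phi v)
   extends to an interior algebra homomorphism B(L) -> C, uniquely.  These maps are exactly
   the Heyting homomorphisms from L into the algebra ρ(C) of open elements of C, and
   ρ(C) ∈ V whenever C ∈ ρ*(V), since a Heyting identity holds in ρ(C) iff its
   Gödel–McKinsey–Tarski translation holds in C.  So homomorphisms B(L) -> C correspond to
   homomorphisms L -> ρ(C): a finite presentation of L, translated and supplemented with
   the relations x_i = iint x_i, presents B(L), and projectivity of M passes to B(M)
   because ρ maps surjections to surjections. *)

From mathcomp Require Import all_boot.
From Stdlib Require Import FunctionalExtensionality ProofIrrelevance ClassicalEpsilon.

Set Implicit Arguments.
Unset Strict Implicit.
Unset Printing Implicit Defensive.

Section InteriorAlgebraTheory.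
Variable A : algebra isig.
Hypothesis HA : is_IA A.
Local Notation "x ⊓ y" := (imeet x y) (at level 40, left associativity).
Local Notation "x ⊔ y" := (ijoin x y) (at level 50, left associativity).
Local Notation "- x" := (icompl x).
Local Notation "⊥" := (ibot A).
Local Notation "⊤" := (itop A).
Local Notation "x ≤ y" := (ile x y) (at level 70).

Lemma imeetC (x y : A) : x ⊓ y = y ⊓ x.
Proof. by case: HA. Qed.
Lemma imeetA (x y z : A) : x ⊓ (y ⊓ z) = x ⊓ y ⊓ z.
Proof. by case: HA => _ []. Qed.
Lemma ijoinC (x y : A) : x ⊔ y = y ⊔ x.
Proof. by case: HA => _ [_ []]. Qed.
Lemma ijoinA (x y z : A) : x ⊔ (y ⊔ z) = x ⊔ y ⊔ z.
Proof. by case: HA => _ [_ [_ []]]. Qed.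
Lemma ijoinKI (x y : A) : x ⊓ (x ⊔ y) = x.
Proof. by case: HA => _ [_ [_ [_ []]]]. Qed.
Lemma imeetKU (x y : A) : x ⊔ (x ⊓ y) = x.
Proof. by case: HA => _ [_ [_ [_ [_ []]]]]. Qed.
Lemma imeetUr (x y z : A) : x ⊓ (y ⊔ z) = x ⊓ y ⊔ x ⊓ z.
Proof. by case: HA => _ [_ [_ [_ [_ [_ []]]]]]. Qed.
Lemma imeetx1 (x : A) : x ⊓ ⊤ = x.
Proof. by case: HA => _ [_ [_ [_ [_ [_ [_ []]]]]]]. Qed.
Lemma ijoinx0 (x : A) : x ⊔ ⊥ = x.
Proof. by case: HA => _ [_ [_ [_ [_ [_ [_ [_ []]]]]]]]. Qed.
Lemma imeetxC (x : A) : x ⊓ - x = ⊥.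
Proof. by case: HA => _ [_ [_ [_ [_ [_ [_ [_ [_ []]]]]]]]]. Qed.
Lemma ijoinxC (x : A) : x ⊔ - x = ⊤.
Proof. by case: HA => _ [_ [_ [_ [_ [_ [_ [_ [_ [_ []]]]]]]]]]. Qed.
Lemma iint1 : iint ⊤ = ⊤.
Proof. by case: HA => _ [_ [_ [_ [_ [_ [_ [_ [_ [_ [_ []]]]]]]]]]]. Qed.
Lemma iintI (x y : A) : iint (x ⊓ y) = iint x ⊓ iint y.
Proof. by case: HA => _ [_ [_ [_ [_ [_ [_ [_ [_ [_ [_ [_ []]]]]]]]]]]]. Qed.
Lemma iint_le (x : A) : iint x ≤ x.
Proof. by case: HA => _ [_ [_ [_ [_ [_ [_ [_ [_ [_ [_ [_ [_ []]]]]]]]]]]]]. Qed.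
Lemma iint_idem (x : A) : iint (iint x) = iint x.
Proof. by case: HA => _ [_ [_ [_ [_ [_ [_ [_ [_ [_ [_ [_ [_ [_ ]]]]]]]]]]]]]. Qed.

Lemma imeetxx (x : A) : x ⊓ x = x.
Proof. by rewrite -{2}(imeetKU x x) ijoinKI. Qed.
Lemma ijoinxx (x : A) : x ⊔ x = x.
Proof. by rewrite -{2}(ijoinKI x x) imeetKU. Qed.
Lemma ijoinACA (w x y z : A) : w ⊔ x ⊔ (y ⊔ z) = w ⊔ y ⊔ (x ⊔ z).
Proof. by rewrite -!ijoinA (ijoinA x y z) (ijoinC x y) -ijoinA. Qed.
Lemma imeetUl (x y z : A) : (y ⊔ z) ⊓ x = y ⊓ x ⊔ z ⊓ x.
Proof. by rewrite imeetC imeetUr (imeetC x) (imeetC x). Qed.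
Lemma ijoinIr (x y z : A) : x ⊔ y ⊓ z = (x ⊔ y) ⊓ (x ⊔ z).
Proof. by rewrite imeetUr (imeetC _ x) ijoinKI imeetUl ijoinA imeetKU. Qed.
Lemma imeetx0 (x : A) : x ⊓ ⊥ = ⊥.
Proof. by rewrite -(imeetxC x) imeetA imeetxx. Qed.
Lemma ijoinx1 (x : A) : x ⊔ ⊤ = ⊤.
Proof. by rewrite -(ijoinxC x) ijoinA ijoinxx. Qed.
Lemma imeet0x (x : A) : ⊥ ⊓ x = ⊥. Proof. by rewrite imeetC imeetx0. Qed.
Lemma ijoin1x (x : A) : ⊤ ⊔ x = ⊤. Proof. by rewrite ijoinC ijoinx1. Qed.
Lemma imeet1x (x : A) : ⊤ ⊓ x = x. Proof. by rewrite imeetC imeetx1. Qed.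
Lemma ijoin0x (x : A) : ⊥ ⊔ x = x. Proof. by rewrite ijoinC ijoinx0. Qed.

Lemma icompl_unique (x y : A) : x ⊓ y = ⊥ -> x ⊔ y = ⊤ -> y = - x.
Proof.
move=> xy0 xy1.
rewrite -(imeetx1 y) -(ijoinxC x) imeetUr (imeetC y x) xy0 ijoin0x.
by rewrite -{2}(imeetx1 (- x)) -xy1 imeetUr (imeetC (- x) x) imeetxC ijoin0x imeetC.
Qed.
Lemma icomplK (x : A) : - - x = x.
Proof. by symmetry; apply: icompl_unique; rewrite 1?imeetC 1?ijoinC ?imeetxC ?ijoinxC. Qed.
Lemma icompl1 : - ⊤ = ⊥.
Proof. by symmetry; apply: icompl_unique; rewrite ?imeetx0 ?ijoinx0. Qed.
Lemma icomplI (x y : A) : - (x ⊓ y) = - x ⊔ - y.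
Proof.
symmetry; apply: icompl_unique.
  by rewrite imeetUr (imeetC x y) -imeetA imeetxC imeetx0 ijoin0x (imeetC y x)
             -imeetA imeetxC imeetx0.
by rewrite ijoinC ijoinIr (ijoinC (- x ⊔ - y) x) ijoinA ijoinxC ijoin1x imeet1x
           -ijoinA (ijoinC (- y) y) ijoinxC ijoinx1.
Qed.
Lemma icomplU (x y : A) : - (x ⊔ y) = - x ⊓ - y.
Proof. by rewrite -{1}(icomplK x) -{1}(icomplK y) -icomplI icomplK. Qed.

Lemma ileEjoin (x y : A) : x ≤ y <-> x ⊔ y = y.
Proof. by rewrite /ile; split=> <-; rewrite ?ijoinKI // ijoinC imeetC imeetKU. Qed.
Lemma ile_refl (x : A) : x ≤ x. Proof. exact: imeetxx. Qed.
Lemma ile_trans (x y z : A) : x ≤ y -> y ≤ z -> x ≤ z.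
Proof. by rewrite /ile => xy yz; rewrite -xy -imeetA yz. Qed.
Lemma ile_anti (x y : A) : x ≤ y -> y ≤ x -> x = y.
Proof. by rewrite /ile => xy yx; rewrite -xy -{2}yx imeetC. Qed.
Lemma ileIl (x y : A) : x ⊓ y ≤ x.
Proof. by rewrite /ile -imeetA (imeetC y) imeetA imeetxx. Qed.
Lemma ileIr (x y : A) : x ⊓ y ≤ y.
Proof. by rewrite /ile -imeetA imeetxx. Qed.
Lemma ileUl (x y : A) : x ≤ x ⊔ y.
Proof. exact: ijoinKI. Qed.
Lemma ileUr (x y : A) : y ≤ x ⊔ y.
Proof. by rewrite ijoinC; apply: ijoinKI. Qed.
Lemma ilexI (x y z : A) : z ≤ x ⊓ y <-> z ≤ x /\ z ≤ y.
Proof.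
split=> [zxy|[zx zy]]; last by rewrite /ile imeetA zx zy.
by split; apply: ile_trans zxy _; [apply: ileIl | apply: ileIr].
Qed.
Lemma ileUx (x y z : A) : x ⊔ y ≤ z <-> x ≤ z /\ y ≤ z.
Proof.
split=> [xyz|]; last by rewrite !ileEjoin => -[xz yz]; rewrite -ijoinA yz xz.
by split; apply: ile_trans _ xyz; [apply: ileUl | apply: ileUr].
Qed.
Lemma ilex1 (x : A) : x ≤ ⊤. Proof. exact: imeetx1. Qed.
Lemma ile0x (x : A) : ⊥ ≤ x. Proof. exact: imeet0x. Qed.
Lemma imeetSr (x y z : A) : x ≤ y -> z ⊓ x ≤ z ⊓ y.
Proof. by move=> xy; apply/ilexI; split; [apply: ileIl | apply: ile_trans (ileIr _ _) xy]. Qed.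

Lemma ile_meetN_join (z a y : A) : z ⊓ - a ≤ y <-> z ≤ y ⊔ a.
Proof.
split=> H.
  rewrite -(imeetx1 z) -(ijoinxC a) imeetUr; apply/ileUx; split.
    exact: ile_trans (ileIr _ _) (ileUr _ _).
  exact: ile_trans H (ileUl _ _).
apply: (@ile_trans _ ((y ⊔ a) ⊓ - a)).
  by rewrite (imeetC z) (imeetC (y ⊔ a)); apply: imeetSr.
by rewrite imeetUl imeetxC ijoinx0; apply: ileIl.
Qed.
Lemma ile_meet_joinN (a z b : A) : a ⊓ z ≤ b <-> z ≤ - a ⊔ b.
Proof. by rewrite -{1}(icomplK a) imeetC ile_meetN_join ijoinC. Qed.

Lemma ile_iint (x y : A) : x ≤ y -> iint x ≤ iint y.
Proof. by rewrite /ile -iintI => ->. Qed.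
Lemma iint0 : iint ⊥ = ⊥.
Proof. exact: ile_anti (iint_le _) (ile0x _). Qed.
Lemma iint_join_open (x y : A) : iint x = x -> iint y = y -> iint (x ⊔ y) = x ⊔ y.
Proof.
move=> xo yo; apply: ile_anti (iint_le _) _; apply/ileUx.
by split; [rewrite -{1}xo | rewrite -{1}yo]; apply: ile_iint; [apply: ileUl | apply: ileUr].
Qed.

Lemma ibigmeet_cat (s t : seq A) : ibigmeet (s ++ t) = ibigmeet s ⊓ ibigmeet t.
Proof. by elim: s => [|x s IH] /=; rewrite ?imeet1x // IH imeetA. Qed.
Lemma iint_bigmeet (s : seq A) : iint (ibigmeet s) = ibigmeet (map (@iint A) s).
Proof. by elim: s => [|x s IH] /=; rewrite ?iint1 // iintI IH. Qed.
Lemma ile_bigmeet (z : A) (s : seq A) :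
  z ≤ ibigmeet s <-> forall x, List.In x s -> z ≤ x.
Proof.
elim: s => [|x s IH] /=; first by split=> // _; apply: ilex1.
rewrite ilexI IH; split=> [[zx zs] y [<-|]|zxs] //; first exact: zs.
by split=> [|y ys]; apply: zxs; [left | right].
Qed.
End InteriorAlgebraTheory.

Lemma args2_eta T (f : 'I_2 -> T) : f = args2 (f ord0) (f ord_max).
Proof.
by apply: functional_extensionality => -[[|[|k]] lt_k2] //=; congr f; apply: val_inj.
Qed.
Lemma args1_eta T (f : 'I_1 -> T) : f = args1 (f ord0).
Proof. by apply: functional_extensionality => -[[|k] lt_k1] //=; congr f; apply: val_inj. Qed.
Lemma args0_eta T (f : 'I_0 -> T) : f = @args0 T.
Proof. by apply: functional_extensionality => -[]. Qed.
Lemma map_args2 T U (g : T -> U) x y : (fun i => g (args2 x y i)) = args2 (g x) (g y).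
Proof. by apply: functional_extensionality => i; rewrite /args2; case: ifP. Qed.
Lemma map_args0 T U (g : T -> U) : (fun i => g (@args0 T i)) = @args0 U.
Proof. by apply: functional_extensionality => -[]. Qed.

Lemma is_hom_comp (S : signature) (A B C : algebra S) (f : B -> C) (g : A -> B) :
  is_hom f -> is_hom g -> is_hom (fun x => f (g x)).
Proof. by move=> homf homg o args; rewrite homg homf. Qed.

Section InteriorHomTheory.
Variables (A B : algebra isig) (f : A -> B).
Hypothesis homf : is_hom f.
Lemma ihom_meet x y : f (imeet x y) = imeet (f x) (f y).
Proof. by rewrite /imeet homf map_args2. Qed.
Lemma ihom_join x y : f (ijoin x y) = ijoin (f x) (f y).
Proof. by rewrite /ijoin homf map_args2. Qed.
Lemma ihom_compl x : f (icompl x) = icompl (f x).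
Proof. by rewrite /icompl homf. Qed.
Lemma ihom_int x : f (iint x) = iint (f x).
Proof. by rewrite /iint homf. Qed.
Lemma ihom_bot : f (ibot A) = ibot B.
Proof. by rewrite /ibot homf map_args0. Qed.
Lemma ihom_top : f (itop A) = itop B.
Proof. by rewrite /itop homf map_args0. Qed.
End InteriorHomTheory.

Lemma is_hom_interior (A B : algebra isig) (f : A -> B) :
  (forall x y, f (imeet x y) = imeet (f x) (f y)) ->
  (forall x y, f (ijoin x y) = ijoin (f x) (f y)) ->
  (forall x, f (icompl x) = icompl (f x)) ->
  (forall x, f (iint x) = iint (f x)) ->
  f (ibot A) = ibot B -> f (itop A) = itop B -> is_hom f.
Proof.
move=> fI fU fN fint f0 f1 [] args /=.
- by rewrite (args2_eta args) map_args2 fI.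
- by rewrite (args2_eta args) map_args2 fU.
- by rewrite (args1_eta args) fN.
- by rewrite (args0_eta args) map_args0 f0.
- by rewrite (args0_eta args) map_args0 f1.
- by rewrite (args1_eta args) fint.
Qed.

Section HeytingHomTheory.
Variables (A B : algebra hsig) (f : A -> B).
Hypothesis homf : is_hom f.
Lemma hhom_meet x y : f (hmeet x y) = hmeet (f x) (f y).
Proof. by rewrite /hmeet homf map_args2. Qed.
Lemma hhom_join x y : f (hjoin x y) = hjoin (f x) (f y).
Proof. by rewrite /hjoin homf map_args2. Qed.
Lemma hhom_imp x y : f (himp x y) = himp (f x) (f y).
Proof. by rewrite /himp homf map_args2. Qed.
Lemma hhom_bot : f (hbot A) = hbot B.
Proof. by rewrite /hbot homf map_args0. Qed.
Lemma hhom_top : f (htop A) = htop B.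
Proof. by rewrite /htop homf map_args0. Qed.
End HeytingHomTheory.

Lemma is_hom_heyting (A B : algebra hsig) (f : A -> B) :
  (forall x y, f (hmeet x y) = hmeet (f x) (f y)) ->
  (forall x y, f (hjoin x y) = hjoin (f x) (f y)) ->
  (forall x y, f (himp x y) = himp (f x) (f y)) ->
  f (hbot A) = hbot B -> f (htop A) = htop B -> is_hom f.
Proof.
move=> fI fU fimp f0 f1 [] args /=.
- by rewrite (args2_eta args) map_args2 fI.
- by rewrite (args2_eta args) map_args2 fU.
- by rewrite (args2_eta args) map_args2 fimp.
- by rewrite (args0_eta args) map_args0 f0.
- by rewrite (args0_eta args) map_args0 f1.
Qed.

Section HeytingAlgebraTheory.
Variable L : algebra hsig.
Hypothesis HL : is_HA L.
Lemma hmeetC (x y : L) : hmeet x y = hmeet y x. Proof. by case: HL. Qed.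
Lemma hjoinKI (x y : L) : hmeet x (hjoin x y) = x. Proof. by case: HL => _ [_ [_ [_ []]]]. Qed.
Lemma hmeetKU (x y : L) : hjoin x (hmeet x y) = x. Proof. by case: HL => _ [_ [_ [_ [_ []]]]]. Qed.
Lemma hmeetx1 (x : L) : hmeet x (htop L) = x. Proof. by case: HL => _ [_ [_ [_ [_ [_ []]]]]]. Qed.
Lemma hle_himp (a x y : L) : hle (hmeet a x) y <-> hle a (himp x y).
Proof. by case: HL => _ [_ [_ [_ [_ [_ [_ [_ ]]]]]]]. Qed.
Lemma hmeetxx (x : L) : hmeet x x = x. Proof. by rewrite -{2}(hmeetKU x x) hjoinKI. Qed.
Lemma himp1x (x : L) : himp (htop L) x = x.
Proof.
have le_imp_x : hle (himp (htop L) x) x.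
  by rewrite -[himp _ x]hmeetx1; apply/hle_himp; rewrite /hle hmeetxx.
have le_x_imp : hle x (himp (htop L) x) by apply/hle_himp; rewrite /hle hmeetx1 hmeetxx.
by rewrite -[LHS]le_imp_x hmeetC le_x_imp.
Qed.
End HeytingAlgebraTheory.

Definition is_lattice_hom (L : algebra hsig) (A : algebra isig) (f : L -> A) : Prop :=
  (forall x y, f (hmeet x y) = imeet (f x) (f y)) /\
  (forall x y, f (hjoin x y) = ijoin (f x) (f y)) /\
  f (hbot L) = ibot A /\ f (htop L) = itop A.

Lemma lattice_hom_bigmeet (L : algebra hsig) (A : algebra isig) (f : L -> A) (s : seq L) :
  is_lattice_hom f -> f (hbigmeet s) = ibigmeet (map f s).
Proof. by case=> fI [_ [_ f1]]; elim: s => [|x s IH] //=; rewrite /hbigmeet /= fI -IH. Qed.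

Definition cnf (A : algebra isig) (l : seq (A * A)) : A :=
  ibigmeet [seq ijoin (icompl p.1) p.2 | p <- l].

Definition map_pairs (T U : Type) (f : T -> U) (s : seq (T * T)) : seq (U * U) :=
  [seq (f p.1, f p.2) | p <- s].

(* [(-a ⊔ b) ⊔ (-c ⊔ d) = -(a ⊓ c) ⊔ (b ⊔ d)]: distributing gives a CNF of a join. *)
Definition clause_join (L : algebra hsig) (s t : seq (L * L)) : seq (L * L) :=
  [seq (hmeet p.1 q.1, hjoin p.2 q.2) | p <- s, q <- t].

(* [ientails x y l] unfolds [x ⊓ cnf l ≤ y] by splitting each clause [-a ⊔ b]
   into its two disjuncts; its Heyting twin [hentails] only involves lattice
   operations, so lattice embeddings preserve and reflect it. *)
Fixpoint ientails (A : algebra isig) (x y : A) (l : seq (A * A)) : Prop :=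
  if l is p :: l' then ientails x (ijoin y p.1) l' /\ ientails (imeet x p.2) y l'
  else ile x y.

Fixpoint hentails (L : algebra hsig) (x y : L) (l : seq (L * L)) : Prop :=
  if l is p :: l' then hentails x (hjoin y p.1) l' /\ hentails (hmeet x p.2) y l'
  else hle x y.

Lemma In_map_iff (T U : Type) (f : T -> U) (s : seq T) y :
  List.In y (map f s) <-> exists x, f x = y /\ List.In x s.
Proof. exact: List.in_map_iff. Qed.

Lemma In_cat (T : Type) (s t : seq T) x : List.In x (s ++ t) <-> List.In x s \/ List.In x t.
Proof. exact: List.in_app_iff. Qed.

Lemma cnf_map_pairs (L : Type) (A : algebra isig) (f : L -> A) s :
  cnf (map_pairs f s) = ibigmeet [seq ijoin (icompl (f p.1)) (f p.2) | p <- s].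
Proof. by rewrite /cnf /map_pairs -map_comp. Qed.

Section ConjunctiveNormalForms.
Variable A : algebra isig.
Hypothesis HA : is_IA A.

Lemma cnf_cat (l1 l2 : seq (A * A)) : cnf (l1 ++ l2) = imeet (cnf l1) (cnf l2).
Proof. by rewrite /cnf map_cat ibigmeet_cat. Qed.

Lemma ile_cnf_ientails (x y : A) (l : seq (A * A)) :
  ile (imeet x (cnf l)) y <-> ientails x y l.
Proof.
elim: l x y => [|p l IH] x y /=; first by rewrite /cnf /= imeetx1.
rewrite /cnf /= -/(cnf l) (imeetC HA _ (cnf l)) (imeetA HA) (imeetUr HA).
by rewrite (ileUx HA) (ile_meetN_join HA) -(imeetA HA) (imeetC HA (cnf l)) (imeetA HA) !IH.
Qed.

Variables (L : algebra hsig) (psi : L -> A).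
Hypothesis psi_lattice : is_lattice_hom psi.

Lemma cnf_clause_join1 (p : L * L) (t : seq (L * L)) :
  cnf (map_pairs psi [seq (hmeet p.1 q.1, hjoin p.2 q.2) | q <- t])
  = ijoin (ijoin (icompl (psi p.1)) (psi p.2)) (cnf (map_pairs psi t)).
Proof.
case: psi_lattice => psiI [psiU _].
elim: t => [|q t IH] /=; first by rewrite (ijoinx1 HA).
rewrite /cnf /= in IH *.
by rewrite IH psiI psiU (icomplI HA) (ijoinACA HA) -(ijoinIr HA).
Qed.

Lemma cnf_clause_join (s t : seq (L * L)) :
  cnf (map_pairs psi (clause_join s t))
  = ijoin (cnf (map_pairs psi s)) (cnf (map_pairs psi t)).
Proof.
elim: s => [|p s IH]; first by rewrite /cnf /= (ijoin1x HA).
rewrite /clause_join /= /map_pairs map_cat -/(map_pairs psi _) cnf_cat.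
rewrite cnf_clause_join1 -/(clause_join s t) IH.
have -> : cnf (map_pairs psi (p :: s))
          = imeet (ijoin (icompl (psi p.1)) (psi p.2)) (cnf (map_pairs psi s)) by [].
by rewrite [RHS](ijoinC HA) (ijoinIr HA) !(ijoinC HA (cnf (map_pairs psi t))).
Qed.

Lemma hentails_ientails (x y : L) (s : seq (L * L)) :
  hentails x y s -> ientails (psi x) (psi y) (map_pairs psi s).
Proof.
case: psi_lattice => psiI [psiU _].
elim: s x y => [|p s IH] x y /=; first by rewrite /hle /ile -psiI => ->.
by case=> ent_join ent_meet; rewrite -psiU -psiI; split; apply: IH.
Qed.

Hypothesis psi_inj : injective psi.

Lemma ientails_hentails (x y : L) (s : seq (L * L)) :
  ientails (psi x) (psi y) (map_pairs psi s) -> hentails x y s.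
Proof.
case: psi_lattice => psiI [psiU _].
elim: s x y => [|p s IH] x y /=; first by rewrite /hle /ile -psiI => /psi_inj.
by rewrite -psiU -psiI; case=> ent_join ent_meet; split; apply: IH.
Qed.
End ConjunctiveNormalForms.

Lemma ile_cnf_transfer (L : algebra hsig) (A1 A2 : algebra isig)
    (HA1 : is_IA A1) (HA2 : is_IA A2) (psi1 : L -> A1) (psi2 : L -> A2) :
  is_lattice_hom psi1 -> injective psi1 -> is_lattice_hom psi2 ->
  forall s t, ile (cnf (map_pairs psi1 s)) (cnf (map_pairs psi1 t)) ->
              ile (cnf (map_pairs psi2 s)) (cnf (map_pairs psi2 t)).
Proof.
move=> psi1_lat psi1_inj psi2_lat s t.
rewrite /cnf (ile_bigmeet HA1) (ile_bigmeet HA2).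
move=> le_st _ /In_map_iff[_ [<- /In_map_iff[p [<- pt]]]].
have := le_st _ (List.in_map _ _ _ (List.in_map _ _ _ pt)).
rewrite /= -(ile_meet_joinN HA1) -(ile_meet_joinN HA2) -!/(cnf _).
rewrite (ile_cnf_ientails HA1) (ile_cnf_ientails HA2).
by move/(ientails_hentails psi1_lat psi1_inj)/(hentails_ientails psi2_lat).
Qed.

Definition boolean_op (A : algebra isig) (o : hop) : ('I_(harity o) -> A) -> A :=
  match o return ('I_(harity o) -> A) -> A with
  | HMeet => fun a => imeet (a ord0) (a ord_max)
  | HJoin => fun a => ijoin (a ord0) (a ord_max)
  | HImp => fun a => ijoin (icompl (a ord0)) (a ord_max)
  | HBot => fun _ => ibot A
  | HTop => fun _ => itop A
  end.

Section OpenElements.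
Variable A : algebra isig.
Hypothesis HA : is_IA A.

Definition open_elt := {x : A | iint x = x}.

Definition open_interior (x : A) : open_elt := exist _ (iint x) (iint_idem HA x).

(* The Heyting algebra ρ(A) of the paper, with [u ⇒ v := iint (-u ⊔ v)]. *)
Definition opens : algebra hsig :=
  @Algebra hsig open_elt (fun o a => open_interior (boolean_op (fun i => sval (a i)))).

Lemma open_val_inj (x y : opens) : sval x = sval y -> x = y.
Proof.
by case: x y => [x xo] [y yo] /= eq_xy; subst y; rewrite (proof_irrelevance _ xo yo).
Qed.
Lemma open_valP (x : opens) : iint (sval x) = sval x.
Proof. exact: proj2_sig x. Qed.
Lemma open_val_meet (x y : opens) : sval (hmeet x y) = imeet (sval x) (sval y).
Proof. by rewrite /= (iintI HA) !open_valP. Qed.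
Lemma open_val_join (x y : opens) : sval (hjoin x y) = ijoin (sval x) (sval y).
Proof. by rewrite /= (iint_join_open HA (open_valP x) (open_valP y)). Qed.
Lemma open_val_imp (x y : opens) :
  sval (himp x y) = iint (ijoin (icompl (sval x)) (sval y)).
Proof. by []. Qed.
Lemma open_val_bot : sval (hbot opens) = ibot A.
Proof. exact: (iint0 HA). Qed.
Lemma open_val_top : sval (htop opens) = itop A.
Proof. exact: (iint1 HA). Qed.
Lemma open_hle (x y : opens) : hle x y <-> ile (sval x) (sval y).
Proof.
rewrite /hle /ile -open_val_meet.
by split=> [-> //|eq_xy]; apply: open_val_inj.
Qed.

Lemma opens_is_HA : is_HA opens.
Proof.
split; [|split; [|split; [|split; [|split; [|split; [|split; [|split]]]]]]].
- by move=> x y; apply: open_val_inj; rewrite !open_val_meet (imeetC HA).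
- by move=> x y z; apply: open_val_inj; rewrite !open_val_meet (imeetA HA).
- by move=> x y; apply: open_val_inj; rewrite !open_val_join (ijoinC HA).
- by move=> x y z; apply: open_val_inj; rewrite !open_val_join (ijoinA HA).
- by move=> x y; apply: open_val_inj; rewrite open_val_meet open_val_join (ijoinKI HA).
- by move=> x y; apply: open_val_inj; rewrite open_val_join open_val_meet (imeetKU HA).
- by move=> x; apply: open_val_inj; rewrite open_val_meet open_val_top (imeetx1 HA).
- by move=> x; apply: open_val_inj; rewrite open_val_join open_val_bot (ijoinx0 HA).
move=> a x y; rewrite !open_hle open_val_meet open_val_imp (imeetC HA) (ile_meet_joinN HA).
split=> [le_a_imp | le_a_int]; last exact: ile_trans le_a_int (iint_le HA _).
by rewrite -(open_valP a); apply: ile_iint.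
Qed.
End OpenElements.

Section OpensMap.
Variables (A B : algebra isig) (HA : is_IA A) (HB : is_IA B) (f : A -> B).
Hypothesis homf : is_hom f.

Lemma hom_open (x : opens HA) : iint (f (sval x)) = f (sval x).
Proof. by rewrite -(ihom_int homf) open_valP. Qed.

Definition opens_map (x : opens HA) : opens HB := exist _ (f (sval x)) (hom_open x).

Lemma opens_map_hom : is_hom opens_map.
Proof.
have val_map x : sval (opens_map x) = f (sval x) by [].
apply: is_hom_heyting => [x y|x y|x y||]; apply: open_val_inj; rewrite !val_map.
- by rewrite !open_val_meet (ihom_meet homf).
- by rewrite !open_val_join (ihom_join homf).
- by rewrite !open_val_imp (ihom_int homf) (ihom_join homf) (ihom_compl homf).
- by rewrite !open_val_bot (ihom_bot homf).
- by rewrite !open_val_top (ihom_top homf).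
Qed.

Lemma opens_map_surj :
  (forall y, exists x, f x = y) -> forall y, exists x, opens_map x = y.
Proof.
move=> f_surj y; have [x fx_y] := f_surj (sval y).
by exists (open_interior HA x); apply: open_val_inj; rewrite /= (ihom_int homf) fx_y open_valP.
Qed.
End OpensMap.

Arguments opens_map {A B} HA HB {f} homf x.
Arguments opens_map_hom {A B} HA HB {f} homf.
Arguments opens_map_surj {A B} HA HB {f} homf.

Section HomsIntoOpens.
Variables (L : algebra hsig) (C : algebra isig) (HC : is_IA C) (h : L -> opens HC).
Hypothesis homh : is_hom h.

Lemma open_val_lattice_hom : is_lattice_hom (fun l => sval (h l)).
Proof.
split; [|split; [|split]] => [x y|x y||] /=.
- by rewrite (hhom_meet homh) open_val_meet.
- by rewrite (hhom_join homh) open_val_join.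
- by rewrite (hhom_bot homh) open_val_bot.
- by rewrite (hhom_top homh) open_val_top.
Qed.

Lemma open_val_himp u v :
  sval (h (himp u v)) = iint (ijoin (icompl (sval (h u))) (sval (h v))).
Proof. by rewrite (hhom_imp homh). Qed.
End HomsIntoOpens.

Section FreeBooleanExtension.
Variables (L : algebra hsig) (B : algebra isig) (e : L -> B).
Hypothesis Be : is_B_of e.

Lemma B_HA : is_HA L. Proof. by case: Be. Qed.
Lemma B_IA : is_IA B. Proof. by case: Be => _ []. Qed.
Lemma B_inj : injective e. Proof. by case: Be => _ [_ []]. Qed.
Lemma B_lattice_hom : is_lattice_hom e.
Proof. by case: Be => _ [_ [_ [? [? [? [? _]]]]]]. Qed.
Lemma B_generated x : bgen e x.
Proof. by case: Be => _ [_ [_ [_ [_ [_ [_ []]]]]]]. Qed.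
Lemma B_iint_cnf (s : seq (L * L)) :
  iint (cnf (map_pairs e s)) = e (hbigmeet [seq himp p.1 p.2 | p <- s]).
Proof. by rewrite cnf_map_pairs; case: Be => _ [_ [_ [_ [_ [_ [_ [_ ->]]]]]]]. Qed.

Local Notation HB := B_IA.

Lemma emb_meet x y : e (hmeet x y) = imeet (e x) (e y). Proof. by case: B_lattice_hom. Qed.
Lemma emb_join x y : e (hjoin x y) = ijoin (e x) (e y). Proof. by case: B_lattice_hom => _ []. Qed.
Lemma emb_bot : e (hbot L) = ibot B. Proof. by case: B_lattice_hom => _ [_ []]. Qed.
Lemma emb_top : e (htop L) = itop B. Proof. by case: B_lattice_hom => _ [_ []]. Qed.

Lemma emb_imp u v : iint (ijoin (icompl (e u)) (e v)) = e (himp u v).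
Proof.
by have := B_iint_cnf [:: (u, v)]; rewrite /cnf /= (imeetx1 HB) /hbigmeet /= (hmeetx1 B_HA).
Qed.
Lemma emb_open x : iint (e x) = e x.
Proof. by rewrite -{2}(himp1x B_HA x) -emb_imp emb_top (icompl1 HB) (ijoin0x HB). Qed.

Lemma cnf_emb1 a : cnf (map_pairs e [:: (htop L, a)]) = e a.
Proof. by rewrite /cnf /= emb_top (icompl1 HB) (ijoin0x HB) (imeetx1 HB). Qed.
Lemma cnf_emb0 : cnf (map_pairs e [:: (htop L, hbot L)]) = ibot B.
Proof. by rewrite cnf_emb1 emb_bot. Qed.

(* [-(-a ⊔ b) = a ⊓ -b] is the CNF [[:: (⊤, a); (b, ⊥)]]. *)
Lemma icompl_cnf s : exists t, icompl (cnf (map_pairs e s)) = cnf (map_pairs e t).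
Proof.
elim: s => [|p s [t IH]]; first by exists [:: (htop L, hbot L)]; rewrite cnf_emb0 (icompl1 HB).
exists (clause_join [:: (htop L, p.1); (p.2, hbot L)] t).
rewrite (cnf_clause_join HB B_lattice_hom) -IH /cnf /= -/(cnf (map_pairs e s)).
rewrite emb_top emb_bot (icompl1 HB) (ijoin0x HB) (ijoinx0 HB) (imeetx1 HB).
by rewrite (icomplI HB) (icomplU HB) (icomplK HB).
Qed.

Lemma B_cnf_rep x : exists s, x = cnf (map_pairs e s).
Proof.
elim: (B_generated x) => {x} [a||| x y _ [s ->] _ [t ->] | x y _ [s ->] _ [t ->] | x _ [s ->]].
- by exists [:: (htop L, a)]; rewrite cnf_emb1.
- by exists [:: (htop L, hbot L)]; rewrite cnf_emb0.
- by exists [::].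
- by exists (s ++ t); rewrite /map_pairs map_cat (cnf_cat HB).
- by exists (clause_join s t); rewrite (cnf_clause_join HB B_lattice_hom).
- exact: icompl_cnf.
Qed.

Lemma B_hom_eq (C : algebra isig) (F1 F2 : B -> C) :
  is_hom F1 -> is_hom F2 -> (forall a, F1 (e a) = F2 (e a)) -> forall x, F1 x = F2 x.
Proof.
move=> homF1 homF2 eqF x; elim: (B_generated x) => {x} [||| x y _ F12x _ F12y
  | x y _ F12x _ F12y | x _ F12x] //.
- by rewrite (ihom_bot homF1) (ihom_bot homF2).
- by rewrite (ihom_top homF1) (ihom_top homF2).
- by rewrite (ihom_meet homF1) (ihom_meet homF2) F12x F12y.
- by rewrite (ihom_join homF1) (ihom_join homF2) F12x F12y.
- by rewrite (ihom_compl homF1) (ihom_compl homF2) F12x.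
Qed.

Section Extension.
Variables (C : algebra isig) (phi : L -> C).
Hypothesis HC : is_IA C.
Hypothesis phi_lattice : is_lattice_hom phi.
Hypothesis phi_imp : forall u v, phi (himp u v) = iint (ijoin (icompl (phi u)) (phi v)).

Definition B_rep (x : B) : seq (L * L) :=
  proj1_sig (constructive_indefinite_description _ (B_cnf_rep x)).
Lemma B_repP x : x = cnf (map_pairs e (B_rep x)).
Proof. exact: proj2_sig (constructive_indefinite_description _ (B_cnf_rep x)). Qed.

(* Well defined because [ile_cnf_transfer] makes the value independent of the chosen CNF. *)
Definition B_ext (x : B) : C := cnf (map_pairs phi (B_rep x)).

Lemma B_ext_cnf s : B_ext (cnf (map_pairs e s)) = cnf (map_pairs phi s).
Proof.
have transfer := ile_cnf_transfer HB HC B_lattice_hom B_inj phi_lattice.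
have rep_s := B_repP (cnf (map_pairs e s)).
by apply: (ile_anti HC); apply: transfer; rewrite -rep_s; apply: (ile_refl HB).
Qed.

Lemma B_ext_emb a : B_ext (e a) = phi a.
Proof.
case: phi_lattice => _ [_ [_ phi1]].
by rewrite -cnf_emb1 B_ext_cnf /cnf /= phi1 (icompl1 HC) (ijoin0x HC) (imeetx1 HC).
Qed.
Lemma B_ext_meet x y : B_ext (imeet x y) = imeet (B_ext x) (B_ext y).
Proof.
have [s ->] := B_cnf_rep x; have [t ->] := B_cnf_rep y.
by rewrite -(cnf_cat HB) /map_pairs -map_cat !B_ext_cnf /map_pairs map_cat (cnf_cat HC).
Qed.
Lemma B_ext_join x y : B_ext (ijoin x y) = ijoin (B_ext x) (B_ext y).
Proof.
have [s ->] := B_cnf_rep x; have [t ->] := B_cnf_rep y.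
by rewrite -(cnf_clause_join HB B_lattice_hom) !B_ext_cnf (cnf_clause_join HC phi_lattice).
Qed.
Lemma B_ext_top : B_ext (itop B) = itop C.
Proof. exact: B_ext_cnf [::]. Qed.
Lemma B_ext_bot : B_ext (ibot B) = ibot C.
Proof.
case: phi_lattice => _ [_ [phi0 phi1]].
by rewrite -cnf_emb0 B_ext_cnf /cnf /= phi0 phi1 (icompl1 HC) (ijoinx0 HC) (imeetx1 HC).
Qed.
Lemma B_ext_compl x : B_ext (icompl x) = icompl (B_ext x).
Proof.
apply: (icompl_unique HC); first by rewrite -B_ext_meet (imeetxC HB) B_ext_bot.
by rewrite -B_ext_join (ijoinxC HB) B_ext_top.
Qed.
Lemma B_ext_int x : B_ext (iint x) = iint (B_ext x).
Proof.
have [s ->] := B_cnf_rep x.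
rewrite B_ext_cnf B_iint_cnf B_ext_emb (lattice_hom_bigmeet _ phi_lattice) -map_comp.
rewrite cnf_map_pairs (iint_bigmeet HC) -map_comp.
by congr ibigmeet; apply: eq_map => p /=; rewrite phi_imp.
Qed.

Lemma B_ext_hom : is_hom B_ext.
Proof.
exact: is_hom_interior B_ext_meet B_ext_join B_ext_compl B_ext_int B_ext_bot B_ext_top.
Qed.
End Extension.

Lemma B_lift (C : algebra isig) (HC : is_IA C) (h : L -> opens HC) :
  is_hom h -> exists F : B -> C, is_hom F /\ forall l, F (e l) = sval (h l).
Proof.
move=> homh; have h_lat := open_val_lattice_hom homh.
exists (B_ext (fun l => sval (h l))); split.
  exact: B_ext_hom HC h_lat (open_val_himp homh).
exact: B_ext_emb HC h_lat.
Qed.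

Definition emb_opens (l : L) : opens HB := exist _ (e l) (emb_open l).

Lemma emb_opens_hom : is_hom emb_opens.
Proof.
apply: is_hom_heyting => [x y|x y|x y||]; apply: open_val_inj.
- by rewrite open_val_meet /= emb_meet.
- by rewrite open_val_join /= emb_join.
- by rewrite open_val_imp /= emb_imp.
- by rewrite open_val_bot /= emb_bot.
- by rewrite open_val_top /= emb_top.
Qed.

Lemma iint_emb_range x : exists l, iint x = e l.
Proof. by have [s ->] := B_cnf_rep x; rewrite B_iint_cnf; eexists. Qed.
End FreeBooleanExtension.

Definition term_algebra (S : signature) : algebra S := @Algebra S (term S) (@App S).

Fixpoint gmt (t : term hsig) : term isig :=
  match t with
  | Var k => @iint (term_algebra isig) (Var k)
  | App o f =>
      @iint (term_algebra isig) (@boolean_op (term_algebra isig) o (fun i => gmt (f i)))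
  end.

Lemma eval_boolean_op (A : algebra isig) (w : nat -> A) o (a : 'I_(harity o) -> term isig) :
  eval w (@boolean_op (term_algebra isig) o a) = boolean_op (fun i => eval w (a i)).
Proof. by case: o a => a /=; rewrite ?map_args2 ?map_args0. Qed.

Lemma vars_lt_boolean_op n o (a : 'I_(harity o) -> term isig) :
  (forall i, vars_lt n (a i)) -> vars_lt n (@boolean_op (term_algebra isig) o a).
Proof. by case: o a => a a_lt /= [[|[|k]] lt_k] //= *; apply: a_lt. Qed.

Lemma gmt_vars_lt n t : vars_lt n t -> vars_lt n (gmt t).
Proof.
elim: t => [k|o f IH] /= t_lt i //.
by apply: vars_lt_boolean_op => j; apply: IH.
Qed.

Lemma eval_gmt (X : algebra hsig) (A : algebra isig) (m : X -> A)
    (m_op : forall o a, m (interp X o a) = iint (boolean_op (fun i => m (a i))))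
    (w : nat -> A) (v : nat -> X) (wv : forall k, iint (w k) = m (v k)) t :
  eval w (gmt t) = m (eval v t).
Proof.
elim: t => [k|o f IH] /=; first exact: wv.
rewrite m_op.
rewrite -[LHS]/(iint (eval w (@boolean_op (term_algebra isig) o (fun i => gmt (f i))))).
rewrite eval_boolean_op; congr (iint (boolean_op _)); apply: functional_extensionality => i.
exact: IH.
Qed.

Lemma emb_boolean_op (L : algebra hsig) (B : algebra isig) (e : L -> B) (Be : is_B_of e) o a :
  e (interp L o a) = iint (boolean_op (fun i => e (a i))).
Proof.
have HB := B_IA Be.
case: o a => a /=.
- by rewrite [in LHS](args2_eta a) -(emb_meet Be) (emb_open Be).
- by rewrite [in LHS](args2_eta a) -(emb_join Be) (emb_open Be).
- by rewrite [in LHS](args2_eta a) (emb_imp Be).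
- by rewrite (args0_eta a) (emb_bot Be) (iint0 HB).
- by rewrite (args0_eta a) (emb_top Be) (iint1 HB).
Qed.

Lemma eval_gmt_emb (L : algebra hsig) (B : algebra isig) (e : L -> B) (Be : is_B_of e)
    (w : nat -> B) (v : nat -> L) (wv : forall k, iint (w k) = e (v k)) t :
  eval w (gmt t) = e (eval v t).
Proof. exact: (eval_gmt (m := e) (emb_boolean_op Be) wv). Qed.

Lemma eval_gmt_opens (A : algebra isig) (HA : is_IA A)
    (w : nat -> A) (v : nat -> opens HA) (wv : forall k, iint (w k) = sval (v k)) t :
  eval w (gmt t) = sval (eval v t).
Proof.
have val_op o a : sval (interp (opens HA) o a) = iint (boolean_op (fun i => sval (a i))) by [].
exact: (eval_gmt (m := fun x : opens HA => sval x) val_op wv).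
Qed.

(* The relations [x_i = iint x_i] make the generators open, as the [e a_i] are. *)
Definition open_var_rel (i : nat) : term isig * term isig :=
  (Var i, @iint (term_algebra isig) (Var i)).

Definition gmt_relations (n : nat) (R : seq (term hsig * term hsig)) :
  seq (term isig * term isig) :=
  [seq (gmt p.1, gmt p.2) | p <- R] ++ [seq open_var_rel i | i <- List.seq 0 n].

Lemma gmt_relations_vars n R :
  (forall p, List.In p R -> vars_lt n p.1 /\ vars_lt n p.2) ->
  forall p, List.In p (gmt_relations n R) -> vars_lt n p.1 /\ vars_lt n p.2.
Proof.
move=> R_lt p; rewrite /gmt_relations => /In_cat[/In_map_iff[q [<- qR]] | /In_map_iff[i [<- i_n]]].
  by have [] := R_lt q qR; split; apply: gmt_vars_lt.
by have /List.in_seq[_ /ltP lt_in] := i_n; split.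
Qed.

Lemma gmt_relations_hold (L : algebra hsig) (B : algebra isig) (e : L -> B) (Be : is_B_of e)
    n (a : nat -> L) R :
  (forall p, List.In p R -> eval a p.1 = eval a p.2) ->
  forall p, List.In p (gmt_relations n R) ->
    eval (fun k => e (a k)) p.1 = eval (fun k => e (a k)) p.2.
Proof.
have ea_open k : iint (e (a k)) = e (a k) by exact: emb_open Be (a k).
move=> R_a p; rewrite /gmt_relations => /In_cat[/In_map_iff[q [<- qR]] | /In_map_iff[i [<- _]]].
  by rewrite /= !(eval_gmt_emb Be ea_open) R_a.
exact/esym/ea_open.
Qed.

Lemma gmt_relations_open_gens (A : algebra isig) (b : nat -> A) n R :
  (forall p, List.In p (gmt_relations n R) -> eval b p.1 = eval b p.2) ->
  forall i, i < n -> iint (b i) = b i.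
Proof.
move=> rel_b i lt_in; symmetry; apply: (rel_b (open_var_rel i)).
apply/In_cat; right; apply: List.in_map; apply/List.in_seq.
by split; [apply/leP | apply/ltP].
Qed.

Lemma gmt_relations_opens (A : algebra isig) (HA : is_IA A) (b : nat -> A) n R :
  (forall p, List.In p (gmt_relations n R) -> eval b p.1 = eval b p.2) ->
  forall p, List.In p R ->
    let b' k : opens HA := open_interior HA (b k) in eval b' p.1 = eval b' p.2.
Proof.
move=> rel_b p pR; apply: open_val_inj.
rewrite -!(@eval_gmt_opens _ HA b) //; apply: (rel_b (gmt p.1, gmt p.2)).
by apply/In_cat; left; apply: (List.in_map (fun p => (gmt p.1, gmt p.2))).
Qed.

Definition universal_for (S : signature) (W : aclass S) (A : algebra S)
    (n : nat) (a : nat -> A) (R : seq (term S * term S)) : Prop :=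
  forall B : algebra S, W B ->
    forall b : nat -> B, (forall p, List.In p R -> eval b p.1 = eval b p.2) ->
    exists h : A -> B,
      is_hom h /\ (forall i, i < n -> h (a i) = b i) /\
      (forall h' : A -> B, is_hom h' -> (forall i, i < n -> h' (a i) = b i) ->
         forall x, h' x = h x).

Section GeneratedVariety.
Variable E : term hsig * term hsig -> Prop.
Local Notation V := (HA_variety E).

Lemma B_in_rho_star (L : algebra hsig) (B : algebra isig) (e : L -> B) :
  V L -> is_B_of e -> rho_star V B.
Proof. by move=> VL Be; split=> [|eq valid_eq]; [apply: B_IA Be | apply: valid_eq Be]. Qed.

Lemma opens_in_V (A : algebra isig) (HA : is_IA A) : rho_star V A -> V (opens HA).
Proof.
case=> _ rhoA; split=> [|eq Eeq v]; first exact: opens_is_HA.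
have wv k : iint (sval (v k)) = sval (v k) by apply: open_valP.
apply: open_val_inj; rewrite -!(eval_gmt_opens wv).
apply: (rhoA (gmt eq.1, gmt eq.2)) => L B e [_ VL] Be w /=.
have [v' wv'] : exists v' : nat -> L, forall k, iint (w k) = e (v' k).
  by apply: (choice (fun k l => iint (w k) = e l)) => k; exact: iint_emb_range Be (w k).
by rewrite !(eval_gmt_emb Be wv') (VL _ Eeq).
Qed.

Lemma B_universal (L : algebra hsig) (B : algebra isig) (e : L -> B) (Be : is_B_of e)
    n (a : nat -> L) R :
  universal_for V n a R ->
  universal_for (rho_star V) n (fun k => e (a k)) (gmt_relations n R).
Proof.
move=> univL B0 B0_rho b rel_b; have HB0 := proj1 B0_rho.
have [hL [homhL [hL_a hL_unique]]] :=
  univL _ (opens_in_V HB0 B0_rho) _ (gmt_relations_opens HB0 rel_b).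
have [F [homF F_e]] := B_lift Be homhL.
have b_open := gmt_relations_open_gens rel_b.
exists F; split=> //; split=> [i lt_in | h' homh' h'_a].
  by rewrite F_e hL_a //= b_open.
pose k l := opens_map (B_IA Be) HB0 homh' (emb_opens Be l).
have homk : is_hom k := is_hom_comp (opens_map_hom _ HB0 homh') (emb_opens_hom Be).
have k_a i : i < n -> k (a i) = open_interior HB0 (b i).
  by move=> lt_in; apply: open_val_inj; rewrite /= h'_a // b_open.
apply: (B_hom_eq Be homh' homF) => l.
by rewrite F_e -(hL_unique k homk k_a).
Qed.

Lemma B_fin_presented (L : algebra hsig) (B : algebra isig) (e : L -> B) :
  fin_presented V L -> is_B_of e -> fin_presented (rho_star V) B.
Proof.
case=> VL [n [a [R [R_lt [R_a univL]]]]] Be.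
split; first exact: B_in_rho_star VL Be.
exists n, (fun k => e (a k)), (gmt_relations n R); split; [|split].
- exact: gmt_relations_vars.
- exact: gmt_relations_hold.
- exact: B_universal.
Qed.

Lemma B_projective (M : algebra hsig) (B : algebra isig) (e : M -> B) :
  projective V M -> is_B_of e -> projective (rho_star V) B.
Proof.
case=> VM projM Be; split; first exact: B_in_rho_star VM Be.
move=> C D C_rho D_rho f g homf f_surj homg.
have [HC HD] := (proj1 C_rho, proj1 D_rho).
pose g' m := opens_map (B_IA Be) HD homg (emb_opens Be m).
have homg' : is_hom g' := is_hom_comp (opens_map_hom _ HD homg) (emb_opens_hom Be).
have [h [homh fh_g']] := projM _ _ (opens_in_V HC C_rho) (opens_in_V HD D_rho) _ g'
  (opens_map_hom HC HD homf) (opens_map_surj HC HD homf f_surj) homg'.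
have [H [homH H_e]] := B_lift Be homh.
exists H; split=> //.
apply: (B_hom_eq Be (is_hom_comp homf homH) homg) => m /=.
by rewrite H_e; apply: (congr1 sval (fh_g' m)).
Qed.
End GeneratedVariety.

Theorem theorem5p4 (E : term hsig * term hsig -> Prop)
    (L M : algebra hsig) (u : L -> M)
    (BL BM : algebra isig) (eL : L -> BL) (eM : M -> BM) (Bu : BL -> BM) :
  unifier (HA_variety E) u ->
  is_B_of eL -> is_B_of eM ->
  is_B_hom eL eM u Bu ->
  unifier (rho_star (HA_variety E)) Bu.
Proof.
move=> [fpL [fpM [projM _]]] BeL BeM [homBu _].
split; first exact: B_fin_presented fpL BeL.
split; first exact: B_fin_presented fpM BeM.
split; first exact: B_projective projM BeM.
exact: homBu.
Qed.
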